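(* Let $q=q_n$ be the transpose top with random measure on $S_n$ and $u=u_n$ the uniform measure on $S_n$. For any sequence of nonnegative integers $(k_n)$ such that $(k_n-n\log n)/n\to-\infty$ as $n\to\infty$, we have $d_2(q^{(k_n)},u)\to\infty$ and $\|q^{(k_n)}-u\|_{TV}\to 1$ as $n\to\infty$.
   Context: The transpose top with random measure on $S_n$ is $q(\tau)=1/n$ if $\tau=(1,j)$, $1\le j\le n$ (with $(1,1)=e$), and $0$ otherwise. $q^{(k)}$ is the $k$-fold convolution power. $d_2(p,u)=\big(|G|\sum_{x\in G}|p(x)-u(x)|^2\big)^{1/2}$ and $\|p-u\|_{TV}=\sup_{A\subset G}(p(A)-u(A))$. *)

From mathcomp Require Import all_boot all_fingroup.
From Stdlib Require Import Reals.
Unset Printing Implicit Defensive.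

Local Open Scope R_scope.

Definition measure (n : nat) := {perm 'I_n} -> R.

Notation "\rsum_ ( x : T ) F" := (\big[Rplus/0%R]_(x : T) F)
  (at level 41, x at level 0, F at level 41) : R_scope.
Notation "\rsum_ ( x 'in' A ) F" := (\big[Rplus/0%R]_(x in A) F)
  (at level 41, x at level 0, F at level 41) : R_scope.

(* transpose top with random: q(tau) = 1/n if tau = (1 j), 1 <= j <= n,
   with (1 1) = e; 0 otherwise.  Position "1" is the ordinal of value 0. *)
Definition ttr (n : nat) : measure n := fun tau =>
  if [exists i : 'I_n, exists j : 'I_n, (nat_of_ord i == 0%nat) && (tau == tperm i j)]
  then / INR n else 0.

Definition unif (n : nat) : measure n := fun _ => / INR (#|{perm 'I_n}|).

Definition conv {n : nat} (p q : measure n) : measure n := fun x =>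
  \rsum_(y : {perm 'I_n}) (p y * q ((y^-1)%g * x)%g).

Definition dirac_e (n : nat) : measure n := fun x => if x == 1%g then 1 else 0.

Fixpoint conv_pow {n : nat} (q : measure n) (k : nat) : measure n :=
  match k with
  | O => dirac_e n
  | S k' => conv (conv_pow q k') q
  end.

Definition dist2 {n : nat} (p u : measure n) : R :=
  sqrt (INR (#|{perm 'I_n}|) * \rsum_(x : {perm 'I_n}) (Rabs (p x - u x) ^ 2)).

(* ||p - u||_TV = sup_{A subset G} (p(A) - u(A)); the empty set gives 0,
   so the maximum starting from 0 is exactly the supremum. *)
Definition tv {n : nat} (p u : measure n) : R :=
  \big[Rmax/0%R]_(A : {set {perm 'I_n}})
     ((\rsum_(x in A) p x) - (\rsum_(x in A) u x)).

From HB Require Import structures.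
From mathcomp Require Import all_boot all_fingroup.
From Stdlib Require Import Reals Lra.
(* [Reals] shadows the ssrnat notations on [nat] (such as [^]); restore them. *)
Import ssrnat.
Unset Printing Implicit Defensive.

(* Lower bound for the transpose top with random shuffle on S_{n+1} before
   time (n+1) ln(n+1): the statistic is the number of fixed points.
   - A step multiplies by a uniform transposition (1 j), so q^(k) is the law
     of the product of the transpositions of a uniform word of length k
     over the positions (conv_pow_expectation).
   - A position j <> 1 absent from the word is a fixed point.  Counting words
     (count_avoiding_words) gives the first two moments of the number of
     such untouched positions: mean mu = n (n/(n+1))^k and variance <= mu,
     so by Chebyshev q^(k) gives mass >= 1 - 4/mu to the set A of
     permutations with >= mu/2 fixed points (good_set_mass).
   - Under the uniform measure the mean number of fixed points is 1
     (Burnside), so by Markov u(A) <= 2/mu (uniform_good_set_mass).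
   - Hence ||q^(k) - u||_TV >= 1 - 6/mu, and testing the L2 distance
     against A gives d_2 >= sqrt(mu/8).
   - Finally mu >= e^(c-1)/2 when k = (n+1)(ln(n+1) - c), so mu -> oo
     under the hypothesis of the theorem. *)

(* Real sums [\big[Rplus/0]] are manipulated with the generic bigop lemmas,
   which need the (commutative) monoid structures of [Rplus] and [Rmult]. *)
Lemma Rplus_assoc' : associative Rplus. Proof. by move=> *; ring. Qed.
Lemma Rmult_assoc' : associative Rmult. Proof. by move=> *; ring. Qed.
HB.instance Definition _ :=
  Monoid.isComLaw.Build R (0 : R) Rplus Rplus_assoc' Rplus_comm Rplus_0_l.
HB.instance Definition _ :=
  Monoid.isComLaw.Build R (1 : R) Rmult Rmult_assoc' Rmult_comm Rmult_1_l.
HB.instance Definition _ := Monoid.isMulLaw.Build R (0 : R) Rmult Rmult_0_l Rmult_0_r.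
HB.instance Definition _ :=
  Monoid.isAddLaw.Build R Rmult Rplus Rmult_plus_distr_r Rmult_plus_distr_l.

Section Words.
Variable T : finType.

Fixpoint words (k : nat) : seq (seq T) :=
  if k is k'.+1 then [seq x :: s | x <- enum T, s <- words k'] else [:: [::]].

Lemma big_wordsS (A : Type) (idx : A) (op : Monoid.com_law idx) k (F : seq T -> A) :
  \big[op/idx]_(s <- words k.+1) F s =
  \big[op/idx]_(x : T) \big[op/idx]_(s <- words k) F (x :: s).
Proof. by rewrite /= big_allpairs_dep big_enum. Qed.

Lemma count_avoiding_words (B : {set T}) k :
  \sum_(s <- words k) (all (fun x => x \notin B) s : nat) = (#|T| - #|B|) ^ k.
Proof.
elim: k => [|k IH]; first by rewrite big_seq1.
rewrite big_wordsS expnS.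
under eq_bigr => x _ do (under eq_bigr => s _ do rewrite /= -mulnb;
  rewrite -big_distrr IH).
rewrite -big_distrl /=; congr (_ * _).
have -> : \sum_(x : T) (x \notin B : nat) = \sum_(x in ~: B) 1.
  by rewrite [RHS]big_mkcond; apply: eq_bigr => x _; rewrite inE; case: (x \notin B).
by rewrite sum1_card cardsCs setCK.
Qed.

Lemma count_words k : \sum_(s <- words k) 1 = #|T| ^ k.
Proof.
have := count_avoiding_words set0 k; rewrite cards0 subn0 => <-.
by apply: eq_bigr => s _; rewrite (introT allP) // => x _; rewrite inE.
Qed.

Definition untouched (C : {set T}) (s : seq T) : nat := \sum_(j in C) (j \notin s).

Lemma notin1_all (j : T) s : (j \notin s) = all (fun x => x \notin [set j]) s.
Proof. by elim: s => [|x s IH] //=; rewrite in_cons negb_or IH inE eq_sym. Qed.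

Lemma notin2_all (i j : T) s :
  (i \notin s) && (j \notin s) = all (fun x => x \notin [set i; j]) s.
Proof.
elim: s => [|x s IH] //=; rewrite !in_cons !inE !negb_or -IH (eq_sym x i) (eq_sym x j).
by case: (i == x); case: (j == x); case: (i \in s); case: (j \in s).
Qed.

(* First moment: summed over all words, each letter of [C] is missed by
   (#|T| - 1)^k words. *)
Lemma untouched_sum (C : {set T}) k :
  \sum_(s <- words k) untouched C s = #|C| * (#|T| - 1) ^ k.
Proof.
rewrite exchange_big /= -sum_nat_const; apply: eq_bigr => j _.
under eq_bigr do rewrite notin1_all.
by rewrite count_avoiding_words cards1.
Qed.

(* Second moment: the diagonal pairs give the first term, the pairs of
   distinct letters (both missed by (#|T| - 2)^k words) the second one. *)
Lemma untouched_sq_sum (C : {set T}) k :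
  \sum_(s <- words k) untouched C s * untouched C s <=
  #|C| * (#|T| - 1) ^ k + #|C| * (#|C| * (#|T| - 2) ^ k).
Proof.
rewrite -mulnDr -sum_nat_const /untouched.
under eq_bigr => s _ do (rewrite big_distrl /=; under eq_bigr => i _ do rewrite big_distrr /=).
rewrite exchange_big /=; apply: leq_sum => i iC.
rewrite exchange_big (bigD1 i) //=; apply: leq_add.
  under eq_bigr do rewrite mulnb andbb notin1_all.
  by rewrite count_avoiding_words cards1.
rewrite -sum_nat_const big_mkcond [X in _ <= X]big_mkcond /=; apply: leq_sum => j _.
case: (j \in C) => //=; case: eqP => [_ //|/eqP ji] /=.
under eq_bigr do rewrite mulnb notin2_all.
by rewrite count_avoiding_words cards2 eq_sym ji.
Qed.
End Words.

Arguments untouched {T}.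

Local Open Scope R_scope.

Lemma INR_sum (I : Type) (r : seq I) (P : pred I) (F : I -> nat) :
  INR (\sum_(i <- r | P i) F i)%nat = \big[Rplus/0]_(i <- r | P i) INR (F i).
Proof. by apply: (big_morph INR) => // x y; apply: plus_INR. Qed.

Lemma Rsum_const (I : Type) (r : seq I) (P : pred I) (c : R) :
  \big[Rplus/0]_(i <- r | P i) c = INR (\sum_(i <- r | P i) 1)%nat * c.
Proof. by rewrite INR_sum big_distrl; apply: eq_bigr => i _ /=; ring. Qed.

Lemma INR_expn (m k : nat) : INR (m ^ k)%nat = INR m ^ k.
Proof. by elim: k => [|k IH] //; rewrite expnS -multE mult_INR IH. Qed.

Lemma Rsum_sub (I : Type) (r : seq I) (P : pred I) (F G : I -> R) :
  \big[Rplus/0]_(i <- r | P i) (F i - G i) =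
  \big[Rplus/0]_(i <- r | P i) F i - \big[Rplus/0]_(i <- r | P i) G i.
Proof. by rewrite /Rminus big_split /= (big_morph Ropp Ropp_plus_distr Ropp_0). Qed.

Lemma Rle_big (I : Type) (r : seq I) (P : pred I) (F G : I -> R) :
  (forall i, P i -> F i <= G i) ->
  \big[Rplus/0]_(i <- r | P i) F i <= \big[Rplus/0]_(i <- r | P i) G i.
Proof. by move=> FG; apply: (big_ind2 (fun x y => x <= y)) => // *; lra. Qed.

Lemma Rle0_big (I : Type) (r : seq I) (P : pred I) (F : I -> R) :
  (forall i, P i -> 0 <= F i) -> 0 <= \big[Rplus/0]_(i <- r | P i) F i.
Proof. by move=> F0; apply: (big_ind (fun x => 0 <= x)) => // *; lra. Qed.

Lemma bigmax_ge (T : finType) (F : T -> R) (a : T) : F a <= \big[Rmax/0]_(x : T) F x.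
Proof.
have : a \in index_enum T by rewrite mem_index_enum.
elim: (index_enum T) => [|b r IH] //; rewrite in_cons big_cons => /orP [/eqP <- | ar].
- exact: Rmax_l.
- exact: Rle_trans (IH ar) (Rmax_r _ _).
Qed.

Lemma bigmax_le (T : finType) (F : T -> R) (c : R) :
  0 <= c -> (forall x, F x <= c) -> \big[Rmax/0]_(x : T) F x <= c.
Proof. by move=> c0 Fc; apply: (big_ind (fun x => x <= c)) => // x y; apply: Rmax_lub. Qed.

Lemma Rle_big_sub (T : finType) (A : pred T) (F : T -> R) :
  (forall x, 0 <= F x) -> \big[Rplus/0]_(x in A) F x <= \big[Rplus/0]_(x : T) F x.
Proof.
move=> F0; rewrite big_mkcond; apply: Rle_big => x _.
by case: (x \in A); [lra | apply: F0].
Qed.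

(* Lower bound for the squared L2 distance to a uniform measure [u] of
   mass 1/N, tested on a set [A] at scale [s]: expand N (p - u - s/N)^2 >= 0. *)
Lemma sq_dist_lower (T : finType) (p u : T -> R) (N s : R) (A : {set T}) :
  0 < N -> (forall x, u x = / N) ->
  2 * s * (\big[Rplus/0]_(x in A) p x - \big[Rplus/0]_(x in A) u x)
    - s ^ 2 * \big[Rplus/0]_(x in A) u x
  <= N * \big[Rplus/0]_(x : T) (p x - u x) ^ 2.
Proof.
move=> N0 uE.
have -> : 2 * s * (\big[Rplus/0]_(x in A) p x - \big[Rplus/0]_(x in A) u x)
    - s ^ 2 * \big[Rplus/0]_(x in A) u x =
    \big[Rplus/0]_(x in A) (2 * s * (p x - u x) - s ^ 2 * u x).
  by rewrite Rsum_sub -!big_distrr Rsum_sub.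
rewrite big_distrr /=; apply: Rle_trans (Rle_big_sub _ _ _ _) => [|x]; last first.
  by apply: Rmult_le_pos; [lra | apply: pow2_ge_0].
apply: Rle_big => x _; rewrite uE.
have e : N * (p x - / N) ^ 2 - (2 * s * (p x - / N) - s ^ 2 * / N) =
         N * (p x - / N - s / N) ^ 2 by field; lra.
have : 0 <= N * (p x - / N - s / N) ^ 2 by apply: Rmult_le_pos; [lra | apply: pow2_ge_0].
lra.
Qed.

Lemma INRS_pos n : 0 < INR n.+1.
Proof. exact/lt_0_INR/ltP. Qed.

Lemma card_perm_pos n : 0 < INR #|{perm 'I_n}|.
Proof. by apply/lt_0_INR/ltP/card_gt0P; exists 1%g. Qed.

Lemma unif_pos n x : 0 < unif n x.
Proof. exact/Rinv_0_lt_compat/card_perm_pos. Qed.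

(* The transposition (1 j) of the top card with the card in position j;
   position 1 of the paper is the ordinal 0. *)
Definition ttop n (j : 'I_n.+1) : {perm 'I_n.+1} := tperm ord0 j.

Lemma ttop_inj n : injective (ttop n).
Proof. by move=> i j /(congr1 (fun p : {perm _} => p ord0)); rewrite !tpermL. Qed.

Lemma ttrE n z :
  ttr n.+1 z = if z \in [set ttop n j | j : 'I_n.+1] then / INR n.+1 else 0.
Proof.
rewrite /ttr; congr (if _ then _ else _); apply/idP/idP.
- move=> /existsP [i /existsP [j /andP [/eqP i0 /eqP ->]]].
  have -> : i = ord0 by apply: val_inj.
  exact: imset_f.
- move=> /imsetP [j _ ->]; apply/existsP; exists ord0; apply/existsP; exists j.
  by rewrite /ttop !eqxx.
Qed.

Lemma ttr_expectation n (h : {perm 'I_n.+1} -> R) :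
  \rsum_(z : {perm 'I_n.+1}) (ttr n.+1 z * h z) =
  / INR n.+1 * \rsum_(j : 'I_n.+1) h (ttop n j).
Proof.
rewrite (bigID (mem [set ttop n j | j : 'I_n.+1])) /=.
rewrite [X in _ + X]big1 => [|z zA]; last by rewrite ttrE (negbTE zA) Rmult_0_l.
rewrite Rplus_0_r big_distrr (big_imset _ (in2W (@ttop_inj n))) /=.
by apply: eq_bigr => j _; rewrite ttrE imset_f.
Qed.

(* The permutation reached after shuffling with the transpositions listed
   by the word [s] (the first letter being applied last). *)
Definition word_perm {n} (s : seq 'I_n.+1) : {perm 'I_n.+1} :=
  foldr (fun j p => (p * ttop n j)%g) 1%g s.

Lemma conv_pow_expectation n k (f : {perm 'I_n.+1} -> R) :
  \rsum_(x : {perm 'I_n.+1}) (conv_pow (ttr n.+1) k x * f x) =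
  (/ INR n.+1) ^ k * \big[Rplus/0]_(s <- words 'I_n.+1 k) f (word_perm s).
Proof.
elim: k f => [|k IH] f.
  rewrite big_seq1 Rmult_1_l (bigD1 1%g) //= big1 => [|x /negbTE x1].
    by rewrite /dirac_e eqxx Rmult_1_l Rplus_0_r.
  by rewrite /dirac_e x1 Rmult_0_l.
have step : \rsum_(x : {perm 'I_n.+1}) (conv_pow (ttr n.+1) k.+1 x * f x) =
    \rsum_(y : {perm 'I_n.+1}) (conv_pow (ttr n.+1) k y *
      (/ INR n.+1 * \rsum_(j : 'I_n.+1) f (y * ttop n j)%g)).
  rewrite /= /conv; under eq_bigr do rewrite big_distrl.
  rewrite exchange_big; apply: eq_bigr => y _.
  rewrite -(ttr_expectation _ (fun z => f (y * z)%g)) big_distrr.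
  rewrite (reindex_inj (mulgI y)); apply: eq_bigr => z _.
  by rewrite mulKg /= Rmult_assoc.
rewrite step IH big_wordsS exchange_big -tech_pow_Rmult -big_distrr.
by rewrite -Rmult_assoc (Rmult_comm (_ ^ k)).
Qed.

Lemma word_perm_fix n (s : seq 'I_n.+1) (j : 'I_n.+1) :
  j != ord0 -> j \notin s -> word_perm s j = j.
Proof.
move=> j0; elim: s => [|x s IH]; first by rewrite perm1.
by rewrite in_cons negb_or => /andP [jx js]; rewrite permM IH // tpermD // eq_sym.
Qed.

Definition fixed_points {n} (p : {perm 'I_n.+1}) : nat :=
  #|('Fix_([set: 'I_n.+1] | 'P)[p])%g|.

Lemma untouched_le_fixed_points n (s : seq 'I_n.+1) :
  (untouched [set~ ord0] s <= fixed_points (word_perm s))%nat.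
Proof.
rewrite /untouched /fixed_points -sum1_card big_mkcond [X in (_ <= X)%nat]big_mkcond.
apply: leq_sum => j _; rewrite in_setC1.
case: eqP => //= /eqP j0; case: (boolP (j \in s)) => //= js.
by rewrite in_setI in_setT (introT afix1P) //= apermE word_perm_fix.
Qed.

(* Burnside's lemma for the transitive action of S_{n+1}: a uniform
   permutation has one fixed point on average. *)
Lemma sum_fixed_points n :
  \sum_(p : {perm 'I_n.+1}) fixed_points p = #|{perm 'I_n.+1}|.
Proof.
have acts : [acts [set: {perm 'I_n.+1}]%G, on [set: 'I_n.+1] | 'P%act].
  by apply/actsP => ? _ ?; rewrite !inE.
have one_orbit : [set orbit 'P%act [set: {perm 'I_n.+1}]%G x | x in [set: 'I_n.+1]] =
    [set [set: 'I_n.+1]].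
  apply/setP => Y; rewrite inE; apply/imsetP/eqP => [[x _ ->] | ->].
    apply/setP => y; rewrite inE; apply/orbitP; exists (tperm x y); first by rewrite inE.
    by rewrite /= apermE tpermL.
  exists ord0; first by rewrite inE.
  apply/setP => y; rewrite inE; symmetry; apply/orbitP.
  by exists (tperm ord0 y); rewrite ?inE //= apermE tpermL.
have := Frobenius_Cauchy acts; rewrite one_orbit cards1 mul1n cardsT => <-.
by apply: eq_bigl => p; rewrite inE.
Qed.

Lemma ttr_ge0 n z : 0 <= ttr n z.
Proof.
rewrite /ttr; case: ifP => _; last lra.
by case: n z => [|n] _; [rewrite Rinv_0; lra | exact/Rlt_le/Rinv_0_lt_compat/INRS_pos].
Qed.

Lemma conv_pow_ge0 n k x : 0 <= conv_pow (ttr n) k x.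
Proof.
elim: k x => [|k IH] x /=; first by rewrite /dirac_e; case: (x == 1%g); lra.
by apply: Rle0_big => y _; apply: Rmult_le_pos; [apply: IH | apply: ttr_ge0].
Qed.

Lemma word_weight_total n k : (/ INR n.+1) ^ k * INR (n.+1 ^ k) = 1.
Proof.
rewrite INR_expn -Rpow_mult_distr Rinv_l ?pow1 //; have := INRS_pos n; lra.
Qed.

Lemma average_const n k (c : R) :
  (/ INR n.+1) ^ k * \big[Rplus/0]_(s <- words 'I_n.+1 k) c = c.
Proof. by rewrite Rsum_const count_words card_ord -Rmult_assoc word_weight_total Rmult_1_l. Qed.

Lemma conv_pow_mass n k : \rsum_(x : {perm 'I_n.+1}) conv_pow (ttr n.+1) k x = 1.
Proof.
under eq_bigr do rewrite -[conv_pow _ _ _]Rmult_1_r.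
by rewrite conv_pow_expectation average_const.
Qed.

(* The expected number of untouched cards among positions 2..n+1 after k
   steps: each is missed with probability (n/(n+1))^k. *)
Definition mu n k : R := INR n * (INR n / INR n.+1) ^ k.

Definition untouched_R n (s : seq 'I_n.+1) : R := INR (untouched [set~ ord0] s).

Lemma card_not_top n : #|[set~ (ord0 : 'I_n.+1)]| = n.
Proof. by rewrite cardsC1 card_ord. Qed.

Lemma untouched_mean n k :
  (/ INR n.+1) ^ k * \big[Rplus/0]_(s <- words 'I_n.+1 k) untouched_R n s = mu n k.
Proof.
rewrite /untouched_R -INR_sum untouched_sum card_not_top card_ord subn1 succnK.
by rewrite -multE mult_INR INR_expn /mu /Rdiv Rpow_mult_distr; ring.
Qed.

Lemma untouched_second_moment n k :
  (/ INR n.+1) ^ k * \big[Rplus/0]_(s <- words 'I_n.+1 k) (untouched_R n s * untouched_R n s)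
  <= mu n k + mu n k ^ 2.
Proof.
have bound := untouched_sq_sum _ [set~ (ord0 : 'I_n.+1)] k.
rewrite card_not_top card_ord subn1 subn2 /= in bound.
apply: Rle_trans (_ : (/ INR n.+1) ^ k * INR (n * n ^ k + n * (n * n.-1 ^ k)) <= _).
  apply: Rmult_le_compat_l; first exact/pow_le/Rlt_le/Rinv_0_lt_compat/INRS_pos.
  rewrite /untouched_R; under eq_bigr do rewrite -mult_INR.
  by rewrite -INR_sum; apply/le_INR/leP.
rewrite !(plus_INR, mult_INR, INR_expn) Rmult_plus_distr_l.
apply: Rplus_le_compat; first by right; rewrite /mu /Rdiv Rpow_mult_distr; ring.
set x := INR n; set r := / INR n.+1.
have x0 : 0 <= x by apply: pos_INR.
have r0 : 0 < r by apply/Rinv_0_lt_compat/INRS_pos.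
have xr1 : r * (x + 1) = 1.
  by rewrite /r /x -S_INR Rinv_l //; have := INRS_pos n; lra.
(* Two distinct cards are both missed less often than if independent:
   (n - 1) / (n + 1) <= (n / (n + 1))^2. *)
have pair_le : r * INR n.-1 <= (x * r) ^ 2.
  have e : INR n.-1 = x - 1 \/ (INR n.-1 = 0 /\ x = 0).
    by rewrite /x; case: (n) => [|n']; [right | left; rewrite succnK S_INR; ring].
  have sq : r * (x - 1) = r * (x - 1) * (r * (x + 1)) by rewrite xr1; ring.
  by case: e => [-> | [-> ->]]; nra.
have pow_pair : (r * INR n.-1) ^ k <= ((x * r) ^ 2) ^ k.
  by apply: pow_incr; split; [apply: Rmult_le_pos; [lra | apply: pos_INR] | apply: pair_le].
have lhs : r ^ k * (x * (x * INR n.-1 ^ k)) = x * x * (r * INR n.-1) ^ k.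
  by rewrite Rpow_mult_distr; ring.
have rhs : (x * (x * r) ^ k) ^ 2 = x * x * ((x * r) ^ 2) ^ k.
  by rewrite -pow_mult (Nat.mul_comm 2 k) pow_mult; ring.
rewrite /mu -/x /Rdiv -/r lhs rhs.
by apply: Rmult_le_compat_l; first nra.
Qed.

Lemma untouched_variance n k :
  (/ INR n.+1) ^ k *
    \big[Rplus/0]_(s <- words 'I_n.+1 k) ((untouched_R n s - mu n k) * (untouched_R n s - mu n k))
  <= mu n k.
Proof.
have second := untouched_second_moment n k; have first := untouched_mean n k.
set c := (/ INR n.+1) ^ k in first second *; set m := mu n k in first second *.
set Y := untouched_R n in first second *.
have expand : \big[Rplus/0]_(s <- words 'I_n.+1 k) ((Y s - m) * (Y s - m)) =
    \big[Rplus/0]_(s <- words 'I_n.+1 k) (Y s * Y s)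
    + (- 2 * m) * \big[Rplus/0]_(s <- words 'I_n.+1 k) Y s
    + \big[Rplus/0]_(s <- words 'I_n.+1 k) (m * m).
  by rewrite big_distrr -!big_split; apply: eq_bigr => s _ /=; ring.
rewrite expand !Rmult_plus_distr_l average_const.
have -> : c * (- 2 * m * \big[Rplus/0]_(s <- words 'I_n.+1 k) Y s) = - 2 * m * m.
  by rewrite -{3}first; ring.
nra.
Qed.

Lemma chebyshev_indicator (y m : R) : 0 < m ->
  (if Rlt_dec y (m / 2) then 1 else 0) <= 4 / (m * m) * ((y - m) * (y - m)).
Proof.
move=> m0; have c0 : 0 <= 4 / (m * m) by apply: Rle_mult_inv_pos; nra.
case: Rlt_dec => ym; last by apply: Rmult_le_pos; [exact: c0 | exact: Rle_0_sqr].
apply: (Rle_trans _ (4 / (m * m) * (m * m / 4))); first by right; field; lra.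
by apply: Rmult_le_compat_l => //; nra.
Qed.

Lemma few_bad_words n k : 0 < mu n k ->
  (/ INR n.+1) ^ k *
    \big[Rplus/0]_(s <- words 'I_n.+1 k) (if Rlt_dec (untouched_R n s) (mu n k / 2) then 1 else 0)
  <= 4 / mu n k.
Proof.
move=> m0; have c0 : 0 <= (/ INR n.+1) ^ k by exact/pow_le/Rlt_le/Rinv_0_lt_compat/INRS_pos.
apply: Rle_trans (_ : (/ INR n.+1) ^ k * (4 / (mu n k * mu n k) *
    \big[Rplus/0]_(s <- words 'I_n.+1 k)
      ((untouched_R n s - mu n k) * (untouched_R n s - mu n k))) <= _).
  apply: Rmult_le_compat_l => //; rewrite big_distrr.
  by apply: Rle_big => s _; apply: chebyshev_indicator.
rewrite -Rmult_assoc (Rmult_comm _ (4 / _)) Rmult_assoc.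
apply: Rle_trans (_ : 4 / (mu n k * mu n k) * mu n k <= _).
  by apply: Rmult_le_compat_l; [apply: Rle_mult_inv_pos; nra | apply: untouched_variance].
by right; field; lra.
Qed.

(* The permutations with at least half the expected number of fixed
   points: likely under q^(k), unlikely under the uniform measure. *)
Definition good_set n k : {set {perm 'I_n.+1}} :=
  [set x | if Rle_dec (mu n k / 2) (INR (fixed_points x)) then true else false].

Lemma good_setP n k x : reflect (mu n k / 2 <= INR (fixed_points x)) (x \in good_set n k).
Proof. by rewrite inE; case: Rle_dec => h; constructor. Qed.

(* A word leaving mu/2 cards untouched shuffles into the good set. *)
Lemma good_set_mass n k : 0 < mu n k ->
  1 - 4 / mu n k <= \rsum_(x in good_set n k) conv_pow (ttr n.+1) k x.
Proof.
move=> m0.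
have -> : \rsum_(x in good_set n k) conv_pow (ttr n.+1) k x =
    \rsum_(x : {perm 'I_n.+1}) (conv_pow (ttr n.+1) k x * (if x \in good_set n k then 1 else 0)).
  by rewrite big_mkcond; apply: eq_bigr => x _; case: (x \in _); ring.
rewrite conv_pow_expectation.
have ok_word s : 1 - (if Rlt_dec (untouched_R n s) (mu n k / 2) then 1 else 0)
    <= (if word_perm s \in good_set n k then 1 else 0).
  case: (Rlt_dec (untouched_R n s) (mu n k / 2)) => [lt | notlt]; first by case: ifP => /= _; lra.
  suff -> : word_perm s \in good_set n k by rewrite /=; lra.
  apply/good_setP; apply: Rle_trans (Rnot_lt_le _ _ notlt) _.
  exact/le_INR/leP/untouched_le_fixed_points.
have c0 : 0 <= (/ INR n.+1) ^ k by exact/pow_le/Rlt_le/Rinv_0_lt_compat/INRS_pos.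
apply: Rle_trans (_ : (/ INR n.+1) ^ k * \big[Rplus/0]_(s <- words 'I_n.+1 k)
    (1 - (if Rlt_dec (untouched_R n s) (mu n k / 2) then 1 else 0)) <= _).
  rewrite Rsum_sub Rmult_minus_distr_l average_const.
  by have := few_bad_words n k m0; lra.
by apply: Rmult_le_compat_l => //; apply: Rle_big => s _; apply: ok_word.
Qed.

(* Markov's inequality for the number of fixed points of a uniform
   permutation, whose mean is 1 by Burnside's lemma. *)
Lemma uniform_good_set_mass n k : 0 < mu n k ->
  \rsum_(x in good_set n k) unif n.+1 x <= 2 / mu n k.
Proof.
move=> m0; set N := INR #|{perm 'I_n.+1}|; have N0 : 0 < N by apply: card_perm_pos.
set c := 2 / mu n k * / N.
have c0 : 0 <= c by apply: Rmult_le_pos; [apply: Rle_mult_inv_pos | apply/Rlt_le/Rinv_0_lt_compat]; lra.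
apply: Rle_trans (_ : \rsum_(x in good_set n k) (c * INR (fixed_points x)) <= _).
  apply: Rle_big => x /good_setP half; rewrite /unif -/N.
  apply: (Rle_trans _ (c * (mu n k / 2))); first by right; rewrite /c; field; lra.
  exact: Rmult_le_compat_l.
apply: Rle_trans (_ : \rsum_(x : {perm 'I_n.+1}) (c * INR (fixed_points x)) <= _).
  by apply: Rle_big_sub => x; apply: Rmult_le_pos => //; apply: pos_INR.
rewrite -big_distrr /= -INR_sum (sum_fixed_points n) -/N /c.
by right; field; lra.
Qed.

Lemma good_set_gap n k : 0 < mu n k ->
  1 - 6 / mu n k <= \rsum_(x in good_set n k) conv_pow (ttr n.+1) k x
                   - \rsum_(x in good_set n k) unif n.+1 x.
Proof.
move=> m0; have := good_set_mass n k m0; have := uniform_good_set_mass n k m0.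
have -> : 6 / mu n k = 4 / mu n k + 2 / mu n k by field; lra.
lra.
Qed.

Lemma tv_lower n k : 0 < mu n k ->
  1 - 6 / mu n k <= tv (conv_pow (ttr n.+1) k) (unif n.+1).
Proof.
move=> m0; apply: Rle_trans (good_set_gap n k m0) _.
exact: (bigmax_ge _ _ (good_set n k)).
Qed.

Lemma tv_le1 n k : tv (conv_pow (ttr n.+1) k) (unif n.+1) <= 1.
Proof.
apply: bigmax_le => [|A]; first lra.
have pA : \rsum_(x in A) conv_pow (ttr n.+1) k x <= 1.
  by rewrite -(conv_pow_mass n k); apply: Rle_big_sub => x; apply: conv_pow_ge0.
have : 0 <= \rsum_(x in A) unif n.+1 x by apply: Rle0_big => x _; apply/Rlt_le/unif_pos.
lra.
Qed.

Lemma dist2_lower n k : 12 <= mu n k ->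
  sqrt (mu n k / 8) <= dist2 (conv_pow (ttr n.+1) k) (unif n.+1).
Proof.
move=> m12; apply: sqrt_le_1_alt; rewrite /dist2.
under eq_bigr do rewrite pow2_abs.
have gap := good_set_gap n k ltac:(lra); have uA := uniform_good_set_mass n k ltac:(lra).
have uA0 : 0 <= \rsum_(x in good_set n k) unif n.+1 x.
  by apply: Rle0_big => x _; apply/Rlt_le/unif_pos.
have sq := sq_dist_lower _ (conv_pow (ttr n.+1) k) (unif n.+1) _ (mu n k / 4) (good_set n k)
  (card_perm_pos n.+1) (fun x => erefl).
set m := mu n k in m12 gap uA sq *.
set pA := \rsum_(x in good_set n k) conv_pow (ttr n.+1) k x in gap sq.
set U := \rsum_(x in good_set n k) unif n.+1 x in gap uA uA0 sq.
have h1 : m / 2 * (1 - 6 / m) <= 2 * (m / 4) * (pA - U).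
  by rewrite (_ : 2 * (m / 4) = m / 2); [apply: Rmult_le_compat_l; lra | field].
have h2 : (m / 4) ^ 2 * U <= (m / 4) ^ 2 * (2 / m) by apply: Rmult_le_compat_l; [nra | lra].
have e1 : m / 2 * (1 - 6 / m) = m / 2 - 3 by field; lra.
have e2 : (m / 4) ^ 2 * (2 / m) = m / 8 by field; lra.
lra.
Qed.


Lemma exp_monotone x y : x <= y -> exp x <= exp y.
Proof. by case=> [xy | ->]; [left; apply: exp_increasing | right]. Qed.

Lemma ln_le_sub1 y : 0 < y -> ln y <= y - 1.
Proof.
move=> y0; apply: Rnot_lt_le => lt.
have := exp_increasing _ _ lt; rewrite exp_ln //; have := exp_ineq1_le (y - 1); lra.
Qed.

(* With k = (n+1)(ln(n+1) - c) steps and c >= 0, the mean number of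
   untouched cards is at least e^(c-1)/2: (n/(n+1))^k >= e^(-k/n). *)
Lemma mu_exp_lower n k (c : R) : (1 <= n)%nat -> 0 <= c ->
  INR k = INR n.+1 * (ln (INR n.+1) - c) -> exp (c - 1) / 2 <= mu n k.
Proof.
move=> n1 c0; set x := INR n; set L := ln (INR n.+1).
have x1 : 1 <= x by apply: (le_INR 1); apply/leP.
have xS : INR n.+1 = x + 1 by rewrite S_INR.
have Lx : L <= x by have := ln_le_sub1 (INR n.+1) (INRS_pos n); rewrite /L xS; lra.
have k0 : 0 <= INR k by apply: pos_INR.
rewrite /mu -/x xS => kE.
set a := x / (x + 1); have a0 : 0 < a by apply: Rlt_mult_inv_pos; lra.
have ln_a : - (1 / x) <= ln a.
  rewrite (_ : a = / ((x + 1) / x)); last by rewrite /a; field; lra.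
  rewrite ln_Rinv; last by apply: Rlt_mult_inv_pos; lra.
  have := ln_le_sub1 ((x + 1) / x) ltac:(apply: Rlt_mult_inv_pos; lra).
  by rewrite (_ : (x + 1) / x - 1 = 1 / x); [lra | field; lra].
have exponent : - L + (c - 1) <= INR k * ln a.
  apply: Rle_trans (_ : INR k * (- (1 / x)) <= _); last exact: Rmult_le_compat_l.
  have Lx1 : L / x <= 1 by apply: (Rmult_le_reg_r x); [lra | field_simplify; lra].
  have cx : 0 <= c / x by apply: Rle_mult_inv_pos; lra.
  rewrite kE (_ : (x + 1) * (L - c) * - (1 / x) = - L + c - L / x + c / x); [lra | field; lra].
have pow_a : exp (c - 1) / (x + 1) <= a ^ k.
  rewrite -(exp_ln (a ^ k)) ?ln_pow //; last exact: pow_lt.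
  apply: Rle_trans (exp_monotone _ _ exponent).
  by rewrite exp_plus exp_Ropp /L xS exp_ln; [right; field | ]; lra.
apply: Rle_trans (_ : x * (exp (c - 1) / (x + 1)) <= _); last first.
  by apply: Rmult_le_compat_l; lra.
have e0 := exp_pos (c - 1).
rewrite (_ : x * (exp (c - 1) / (x + 1)) = exp (c - 1) * (x / (x + 1))); last by field; lra.
rewrite /Rdiv; apply: Rmult_le_compat_l; first lra.
apply: (Rmult_le_reg_r (x + 1)); first lra.
by rewrite Rmult_assoc Rinv_l; lra.
Qed.

(* Bounds at a single n: when the normalized deficit
   c_n = -(k - n ln n)/n exceeds 2T (with T >= 12), both distances are
   controlled by mu >= e^(c_n - 1)/2 >= c_n/2 > T. *)
Lemma cutoff_bounds n k T : (2 <= n)%nat -> 12 <= T ->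
  2 * T < - ((INR k - INR n * ln (INR n)) / INR n) ->
  sqrt (T / 8) <= dist2 (conv_pow (ttr n) k) (unif n) /\
  1 - 6 / T <= tv (conv_pow (ttr n) k) (unif n) <= 1.
Proof.
case: n => [|n] // n2 T12; set c := - _ => cT.
have N0 := INRS_pos n.
have kE : INR k = INR n.+1 * (ln (INR n.+1) - c) by rewrite /c; field; lra.
have mu_c : c / 2 <= mu n k.
  apply: Rle_trans (mu_exp_lower n k c n2 ltac:(lra) kE).
  by have := exp_ineq1_le (c - 1); lra.
have muT : T < mu n k by lra.
split; [|split].
- by apply: Rle_trans (dist2_lower n k ltac:(lra)); apply: sqrt_le_1_alt; lra.
- apply: Rle_trans (tv_lower n k ltac:(lra)).
  suff : 6 / mu n k <= 6 / T by lra.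
  by apply: Rmult_le_compat_l; [lra | apply: Rinv_le_contravar; lra].
- exact: tv_le1.
Qed.

Lemma eventually_cutoff_bounds (k : nat -> nat) T :
  cv_infty (fun n => - ((INR (k n) - INR n * ln (INR n)) / INR n)) -> 12 <= T ->
  exists N, forall n, (N <= n)%coq_nat ->
    sqrt (T / 8) <= dist2 (conv_pow (ttr n) (k n)) (unif n) /\
    1 - 6 / T <= tv (conv_pow (ttr n) (k n)) (unif n) <= 1.
Proof.
move=> kc T12; have [N cN] := kc (2 * T).
exists (maxn N 2) => n /leP; rewrite geq_max => /andP [Nn n2].
by apply: cutoff_bounds => //; apply/cN/leP.
Qed.

Theorem proposition3p2 (k : nat -> nat) :
  cv_infty (fun n => - ((INR (k n) - INR n * ln (INR n)) / INR n))%R ->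
  cv_infty (fun n => dist2 (conv_pow (ttr n) (k n)) (unif n)) /\
  Un_cv (fun n => tv (conv_pow (ttr n) (k n)) (unif n)) 1%R.
Proof.
move=> kc; split.
- move=> M; set T := Rmax 12 (8 * (Rabs M + 1) ^ 2).
  have TM : 8 * (Rabs M + 1) ^ 2 <= T := Rmax_r _ _.
  have [N bounds] := eventually_cutoff_bounds k T kc (Rmax_l _ _).
  exists N => n /bounds [d2 _]; apply: Rlt_le_trans d2.
  have : sqrt ((Rabs M + 1) ^ 2) <= sqrt (T / 8) by apply: sqrt_le_1_alt; lra.
  rewrite sqrt_pow2; last by have := Rabs_pos M; lra.
  by have := Rle_abs M; lra.
- move=> eps eps0; set T := Rmax 12 (6 / eps + 1).
  have T12 : 12 <= T := Rmax_l _ _; have T_eps : 6 / eps + 1 <= T := Rmax_r _ _.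
  have [N bounds] := eventually_cutoff_bounds k T kc T12.
  exists N => n /bounds [_ [lo hi]].
  have small : 6 / T < eps.
    apply: (Rmult_lt_reg_r T); first lra.
    rewrite (_ : 6 / T * T = 6); last by field; lra.
    have : eps * (6 / eps) < eps * T by apply: Rmult_lt_compat_l; lra.
    by rewrite (_ : eps * (6 / eps) = 6); [lra | field; lra].
  by rewrite /Rdist Rabs_left1; lra.
Qed.
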